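(* Let $m_1 > m_2 > \dots > m_k$ be a hierarchy of measures as in the context, and let $0 \le s < e \le 1440$ with $T = e - s$. Then the Timehash index key set $H(s,e)$ satisfies $$|H(s,e)| \le \left\lfloor \frac{T}{m_1} \right\rfloor + 1 + B, \qquad B = 2\sum_{i=2}^{k}\left(\frac{m_{i-1}}{m_i} - 1\right),$$ where $B$ depends only on the hierarchy; in particular $|H(s,e)| = O(T/m_1)$. For the hierarchy $(m_1,\dots,m_5) = (240,60,15,5,1)$ one has $B = 24$.
   Context: Time of day is measured in minutes since midnight, $\{0,1,\dots,1439\}$. A hierarchy of measures is a sequence of positive integers $m_1 > m_2 > \dots > m_k$ with $m_k = 1$, $m_i$ dividing $m_{i-1}$ for $2 \le i \le k$, and $m_1$ dividing $1440$. A level-$i$ block is a set of minutes $[a, a+m_i) = \{a, \dots, a+m_i-1\}$ with $a$ a nonnegative multiple of $m_i$ and $a + m_i \le 1440$; its key is the pair $(i,a)$. Every level-$i$ block with $i \ge 2$ is contained in a unique level-$(i-1)$ block, its parent. For a range $0 \le s < e \le 1440$ (the minutes $s,\dots,e-1$), the index key set $H(s,e)$ is the set of keys of all blocks $B$ (at any level) such that $B \subseteq [s,e)$ and either $B$ is at level 1 or the parent of $B$ is not contained in $[s,e)$ (the decomposition into complete coarsest blocks inside the range, with partially covered boundary blocks recursively refined at finer levels). *)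

From mathcomp Require Import all_boot all_order.
Set Implicit Arguments. Unset Strict Implicit. Unset Printing Implicit Defensive.

(* A hierarchy of measures is the list ms = [:: m_1; ...; m_k].
   Levels are 0-indexed in Rocq: level i (0 <= i < k) has measure nth 0 ms i,
   i.e. the paper's level i+1. *)
Definition meas (ms : seq nat) (i : nat) : nat := nth 0 ms i.

Definition hierarchy (ms : seq nat) : Prop :=
  [/\ 0 < size ms,
      sorted (fun x y => y < x) ms,
      last 0 ms = 1,
      (forall i, 0 < i < size ms -> meas ms i %| meas ms i.-1)
    & head 0 ms %| 1440].

Definition is_block (ms : seq nat) (i a : nat) : bool :=
  (meas ms i %| a) && (a + meas ms i <= 1440).

Definition in_range (s e a m : nat) : bool := (s <= a) && (a + m <= e).

Definition parent_start (ms : seq nat) (i a : nat) : nat :=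
  a %/ meas ms i.-1 * meas ms i.-1.

(* The index key set H(s,e): keys (i, a) (i 0-indexed level, a start minute). *)
Definition Hset (ms : seq nat) (s e : nat) : {set 'I_(size ms) * 'I_1440} :=
  [set x : 'I_(size ms) * 'I_1440 |
     let i := nat_of_ord x.1 in let a := nat_of_ord x.2 in
     [&& is_block ms i a, in_range s e a (meas ms i)
       & (i == 0) || ~~ in_range s e (parent_start ms i a) (meas ms i.-1)]].

(* B = 2 * sum_{i=2}^k (m_{i-1}/m_i - 1)  (exact division by hierarchy). *)
Definition Bconst (ms : seq nat) : nat :=
  2 * \sum_(1 <= i < size ms) (meas ms i.-1 %/ meas ms i - 1).

From mathcomp Require Import all_boot all_order zify.

Set Implicit Arguments.
Unset Strict Implicit.
Unset Printing Implicit Defensive.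

(* Level-1 keys are multiples of m_1 inside an interval of length T, so there
   are at most T/m_1 + 1 of them.  A key of a deeper level i is a child of a
   level-(i-1) block meeting [s,e) but sticking out of it on the left or on the
   right; that parent then contains s (resp. e-1), so it is a single block, and
   its first (resp. last) child is not inside [s,e).  This leaves at most
   m_(i-1)/m_i - 1 keys of level i on each side. *)

Lemma card_set_pair (I J : finType) (C : {set I * J}) :
  #|C| = \sum_(i : I) #|[set j | (i, j) \in C]|.
Proof.
rewrite -sum1_card (eq_bigr (fun i => \sum_(j in [set j | (i, j) \in C]) 1)).
  by rewrite pair_big_dep; apply: eq_bigl => -[i j]; rewrite !inE.
by move=> i _; rewrite sum1_card.
Qed.

Lemma card_multiples_window N (A : {pred 'I_N}) m lo n :
  0 < m -> m %| lo -> (forall a, a \in A -> m %| a /\ lo <= a < lo + n * m) ->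
  #|A| <= n.
Proof.
move=> m_gt0 m_lo inA.
have -> : n = size [seq lo + j * m | j <- iota 0 n] by rewrite size_map size_iota.
rewrite cardE -(size_map val).
apply: uniq_leq_size => [|x /mapP[a]]; first by rewrite (map_inj_uniq val_inj) enum_uniq.
rewrite mem_enum => /inA[m_a /andP[lo_a a_lt]] ->.
have m_a_lo : m %| a - lo by apply: dvdn_sub.
apply/mapP; exists ((a - lo) %/ m); last by rewrite divnK ?subnKC.
by rewrite mem_iota add0n ltn_divLR //; lia.
Qed.

Lemma dvdn_add_leq m a b : m %| a -> m %| b -> a < b -> a + m <= b.
Proof.
move=> m_a m_b ab; rewrite -leq_subRL ?(ltnW ab) //.
by apply: dvdn_leq; [rewrite subn_gt0 | apply: dvdn_sub].
Qed.

Lemma trunc_mul_eq M q x : 0 < M -> q * M <= x < q * M + M -> x %/ M * M = q * M.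
Proof.
move=> M_gt0 /andP[qM_x x_lt]; rewrite -(subnKC qM_x) divnMDl // divn_small ?addn0 //.
by rewrite ltn_subLR.
Qed.

Section CutParent.

Variables m M : nat.
Hypotheses (m_gt0 : 0 < m) (M_gt0 : 0 < M) (m_M : m %| M).

Lemma trunc_bounds x : x %/ M * M <= x < x %/ M * M + M.
Proof. by rewrite leq_divM -mulSnr ltn_ceil. Qed.

Lemma left_cut_window s a :
  m %| a -> s <= a -> a %/ M * M < s ->
  s %/ M * M + m <= a < s %/ M * M + M.
Proof.
move=> m_a s_a Pa_s; have /andP[Pa_a a_Pa] := trunc_bounds a.
have -> : s %/ M * M = a %/ M * M by apply: trunc_mul_eq; lia.
rewrite a_Pa andbT dvdn_add_leq ?dvdn_mull //; lia.
Qed.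

Lemma right_cut_window e a :
  m %| a -> a + m <= e -> e < a %/ M * M + M ->
  (e - 1) %/ M * M <= a < (e - 1) %/ M * M + (M - m).
Proof.
move=> m_a a_e e_Pa; have /andP[Pa_a _] := trunc_bounds a.
have -> : (e - 1) %/ M * M = a %/ M * M by apply: trunc_mul_eq; lia.
have : a + m + m <= a %/ M * M + M.
  by apply: dvdn_add_leq; rewrite ?dvdn_add ?dvdn_mull //; lia.
lia.
Qed.

End CutParent.

Lemma meas_gt0 ms i : hierarchy ms -> i < size ms -> 0 < meas ms i.
Proof.
case=> size_gt0 sorted_ms last_ms _ _ i_lt.
have [i1_lt | ] := ltnP i.+1 (size ms).
  by apply: leq_ltn_trans (sortedP 0 sorted_ms i i1_lt).
rewrite leq_eqVlt ltnNge i_lt orbF => /eqP size_ms.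
by move: last_ms; rewrite (last_nth 0) size_ms /meas /= => ->.
Qed.

Lemma card_level0_keys ms s e (i : 'I_(size ms)) :
  hierarchy ms -> val i = 0 ->
  #|[set a | (i, a) \in Hset ms s e]| <= (e - s) %/ head 0 ms + 1.
Proof.
move=> hier i0; have m_gt0 := meas_gt0 hier (ltn_ord i).
have m_head : meas ms i = head 0 ms by rewrite i0 /meas nth0.
rewrite -m_head; apply: (card_multiples_window m_gt0 (dvdn_mull _ (dvdnn _))).
move=> a; rewrite !inE /is_block /in_range /= => /and3P[/andP[m_a _] /andP[s_a a_e] _].
by split=> //; apply/andP; split; [apply: leq_trans (leq_divM _ _) s_a | lia].
Qed.

Lemma card_level_keys ms s e (i : 'I_(size ms)) :
  hierarchy ms -> 0 < val i ->
  #|[set a | (i, a) \in Hset ms s e]| <= 2 * (meas ms i.-1 %/ meas ms i - 1).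
Proof.
move=> hier i_gt0.
have m_M : meas ms i %| meas ms i.-1 by case: hier => _ _ _ -> //; rewrite i_gt0 ltn_ord.
have m_gt0 := meas_gt0 hier (ltn_ord i).
have M_gt0 := meas_gt0 hier (leq_ltn_trans (leq_pred i) (ltn_ord i)).
move: m_M; rewrite /Hset /parent_start.
set m := meas ms i; set M := meas ms i.-1 => m_M.
have window : (M %/ m - 1) * m = M - m by rewrite mulnBl divnK ?mul1n.
rewrite -(cardsID [set a : 'I_1440 | a %/ M * M < s]) mul2n -addnn.
apply: leq_add.
  apply: (card_multiples_window m_gt0 (_ : m %| s %/ M * M + m)).
    by rewrite dvdn_add ?dvdn_mull.
  move=> a; rewrite !inE /= -/m -/M window -addnA (subnKC (dvdn_leq M_gt0 m_M)).
  move=> /andP[/and3P[/andP[m_a _] /andP[s_a _] _] Pa_s]; split=> //.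
  exact: (left_cut_window m_gt0 M_gt0 m_M).
apply: (card_multiples_window m_gt0 (_ : m %| (e - 1) %/ M * M)); first exact: dvdn_mull.
move=> a; rewrite !inE /= -/m -/M window.
move=> /andP[s_Pa /and3P[/andP[m_a _] /andP[_ a_e] cut]]; split=> //.
apply: (right_cut_window m_gt0 M_gt0 m_M m_a a_e).
move: cut; rewrite /in_range -leqNgt in s_Pa *.
by rewrite s_Pa (negPf (lt0n_neq0 i_gt0)) /= -ltnNge.
Qed.

Theorem mainTheorem3 :
  (forall (ms : seq nat) (s e : nat),
     hierarchy ms -> s < e <= 1440 ->
     #|Hset ms s e| <= (e - s) %/ head 0 ms + 1 + Bconst ms)
  /\ Bconst [:: 240; 60; 15; 5; 1] = 24.
Proof.
split; last by rewrite /Bconst unlock.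
(* The bound holds for all s and e. *)
move=> ms s e hier _; rewrite card_set_pair.
case: ms hier => [[]//|m1 ms] hier.
rewrite big_ord_recl /Bconst big_add1 big_mkord big_distrr leq_add //.
  exact: card_level0_keys.
by apply: leq_sum => i _; apply: card_level_keys.
Qed.
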